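(* Consider the reduced return maps of the Bowtie network described in the context, with sets $\mathcal{E}_n$ and $\tilde{\mathcal{E}}_n$ as defined there. If $\delta>0$ then $\mathcal{E}_1=\mathcal{E}_2$. If $\tilde\delta>0$ then $\tilde{\mathcal{E}}_1=\tilde{\mathcal{E}}_2$.
   Context: Setting (Bowtie network). A $\mathbb{Z}_2^5$-equivariant vector field on $\mathbb{R}^5$ has equilibria $\xi_j$ on the $x_j$-axes and two heteroclinic cycles $R=[\xi_1\to\xi_2\to\xi_3\to\xi_1]$ and $L=[\xi_2\to\xi_4\to\xi_5\to\xi_2]$, each connection $[\xi_i\to\xi_j]$ lying in the $x_ix_j$-plane. All eigenvalues are real: at $\xi_j$, $-c_{jk}<0$ is the contracting and $e_{jk}>0$ the expanding eigenvalue in the $x_k$-direction; concretely the positive numbers $e_{12},c_{13},c_{14},c_{15}$ (at $\xi_1$), $c_{21},c_{25},e_{23},e_{24}$ (at $\xi_2$), $e_{31},c_{32},c_{34},c_{35}$ (at $\xi_3$), $e_{45},c_{41},c_{42},c_{43}$ (at $\xi_4$), $e_{52},c_{51},c_{53},c_{54}$ (at $\xi_5$). Global maps are the identity and local maps are given by the linearized flow; it is assumed throughout that $e_{23}>e_{24}$. Define $\rho=\frac{c_{42}c_{54}c_{25}}{e_{24}e_{45}e_{52}}$, $\tilde\rho=\frac{c_{32}c_{13}c_{21}}{e_{23}e_{31}e_{12}}$, $\nu=-\frac{e_{23}}{e_{24}}+\frac{c_{25}c_{43}}{e_{24}e_{45}}+\frac{c_{53}c_{42}c_{25}}{e_{45}e_{24}e_{52}}$,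 $\tilde\nu=-\frac{e_{24}}{e_{23}}+\frac{c_{21}c_{34}}{e_{23}e_{31}}+\frac{c_{14}c_{32}c_{21}}{e_{31}e_{23}e_{12}}$, $\mu=\frac{c_{21}}{e_{24}}+\frac{c_{25}c_{41}}{e_{24}e_{45}}+\frac{c_{51}c_{42}c_{25}}{e_{45}e_{24}e_{52}}$, $\tilde\mu=\frac{c_{25}}{e_{23}}+\frac{c_{21}c_{35}}{e_{23}e_{31}}+\frac{c_{15}c_{32}c_{21}}{e_{31}e_{23}e_{12}}$, $\delta=\frac{c_{43}}{e_{45}}+\frac{c_{53}c_{42}}{e_{52}e_{45}}-\frac{e_{23}c_{54}c_{42}}{e_{52}e_{45}e_{24}}$, $\tilde\delta=\frac{c_{34}}{e_{31}}+\frac{c_{14}c_{32}}{e_{12}e_{31}}-\frac{e_{24}c_{13}c_{32}}{e_{12}e_{31}e_{23}}$. Reduced return maps. In the relevant coordinates $(x_3,x_4,x_5)$ of the cross section $H_1^{\mathrm{out},2}$ (identified with $H_2^{\mathrm{in},1}$), points which after passing $\xi_2$ follow the connection to $\xi_3$ form $D_{h_R}=\{(x_3,x_4,x_5): 0<x_3<1,\ x_4>0,\ x_5>0,\ x_4<x_3^{e_{24}/e_{23}}\}$, and the return map around $R$ is $h_R:D_{h_R}\to(0,\infty)^3$, $h_R(x_3,x_4,x_5)=(x_3^{\tilde\rho},x_4x_3^{\tilde\nu},x_5x_3^{\tilde\mu})$. In the relevant coordinates $(x_1,x_3,x_4)$ of $H_5^{\mathrm{out},2}$ (identified with $H_2^{\mathrm{in},5}$),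 points which after passing $\xi_2$ follow the connection to $\xi_4$ form $D_{h_L}=\{(x_1,x_3,x_4): x_1>0,\ x_3>0,\ 0<x_4<1,\ x_4>x_3^{e_{24}/e_{23}}\}$, and the return map around $L$ is $h_L:D_{h_L}\to(0,\infty)^3$, $h_L(x_1,x_3,x_4)=(x_1x_4^{\mu},x_3x_4^{\nu},x_4^{\rho})$. For $n\ge1$, $\tilde{\mathcal{E}}_n$ is the set of points $x$ such that $x,h_R(x),\dots,h_R^{n-1}(x)$ all lie in $D_{h_R}$ (points taking at least $n$ turns around the $R$-cycle), and $\mathcal{E}_n$ is the set of points $y$ such that $y,h_L(y),\dots,h_L^{n-1}(y)$ all lie in $D_{h_L}$ (points taking at least $n$ turns around the $L$-cycle). In particular $\tilde{\mathcal{E}}_1=D_{h_R}$, $\mathcal{E}_1=D_{h_L}$. *)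

From Stdlib Require Import Reals.
Open Scope R_scope.

(* The 20 eigenvalue magnitudes of the Bowtie network. *)
Record params := Params {
  e12 : R; c13 : R; c14 : R; c15 : R;
  c21 : R; c25 : R; e23 : R; e24 : R;
  e31 : R; c32 : R; c34 : R; c35 : R;
  e45 : R; c41 : R; c42 : R; c43 : R;
  e52 : R; c51 : R; c53 : R; c54 : R }.

Definition valid_params (p : params) : Prop :=
  0 < e12 p /\ 0 < c13 p /\ 0 < c14 p /\ 0 < c15 p /\
  0 < c21 p /\ 0 < c25 p /\ 0 < e23 p /\ 0 < e24 p /\
  0 < e31 p /\ 0 < c32 p /\ 0 < c34 p /\ 0 < c35 p /\
  0 < e45 p /\ 0 < c41 p /\ 0 < c42 p /\ 0 < c43 p /\
  0 < e52 p /\ 0 < c51 p /\ 0 < c53 p /\ 0 < c54 p /\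
  e23 p > e24 p.

Section Quantities.
Variable p : params.

Definition rho : R := c42 p * c54 p * c25 p / (e24 p * e45 p * e52 p).
Definition rho_t : R := c32 p * c13 p * c21 p / (e23 p * e31 p * e12 p).
Definition nu : R := - (e23 p / e24 p) + c25 p * c43 p / (e24 p * e45 p)
  + c53 p * c42 p * c25 p / (e45 p * e24 p * e52 p).
Definition nu_t : R := - (e24 p / e23 p) + c21 p * c34 p / (e23 p * e31 p)
  + c14 p * c32 p * c21 p / (e31 p * e23 p * e12 p).
Definition mu : R := c21 p / e24 p + c25 p * c41 p / (e24 p * e45 p)
  + c51 p * c42 p * c25 p / (e45 p * e24 p * e52 p).
Definition mu_t : R := c25 p / e23 p + c21 p * c35 p / (e23 p * e31 p)
  + c15 p * c32 p * c21 p / (e31 p * e23 p * e12 p).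
Definition delta : R := c43 p / e45 p + c53 p * c42 p / (e52 p * e45 p)
  - e23 p * c54 p * c42 p / (e52 p * e45 p * e24 p).
Definition delta_t : R := c34 p / e31 p + c14 p * c32 p / (e12 p * e31 p)
  - e24 p * c13 p * c32 p / (e12 p * e31 p * e23 p).

Definition point := (R * R * R)%type.

Definition D_hR (x : point) : Prop :=
  let '(x3, x4, x5) := x in
  0 < x3 < 1 /\ 0 < x4 /\ 0 < x5 /\ x4 < Rpower x3 (e24 p / e23 p).

Definition h_R (x : point) : point :=
  let '(x3, x4, x5) := x in
  (Rpower x3 rho_t, x4 * Rpower x3 nu_t, x5 * Rpower x3 mu_t).

Definition D_hL (y : point) : Prop :=
  let '(x1, x3, x4) := y in
  0 < x1 /\ 0 < x3 /\ 0 < x4 < 1 /\ x4 > Rpower x3 (e24 p / e23 p).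

Definition h_L (y : point) : point :=
  let '(x1, x3, x4) := y in
  (x1 * Rpower x4 mu, x3 * Rpower x4 nu, Rpower x4 rho).

(* points taking at least n turns: x, h x, ..., h^(n-1) x all in the domain *)
Definition E_R (n : nat) (x : point) : Prop :=
  forall k : nat, (k < n)%nat -> D_hR (Nat.iter k h_R x).
Definition E_L (n : nat) (y : point) : Prop :=
  forall k : nat, (k < n)%nat -> D_hL (Nat.iter k h_L y).

End Quantities.

(* Both domains are cut out by one inequality between [x4] and [x3^(e24/e23)],
   and on the domain the relevant base ([x4] for [h_L], [x3] for [h_R]) lies in
   (0,1), where [Rpower] is decreasing in the exponent.  Taking that inequality
   through one return map multiplies exponents, and the defining inequality
   survives exactly when an exponent gap is positive; that gap equals
   [delta * c25/e23] (resp. [delta_t * c21/e23]).  So the domain is forward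
   invariant, and every point of [E_1] makes a second turn. *)
From Stdlib Require Import Reals Lra Lia.
Open Scope R_scope.

Lemma invariant_iter_domain_1_2 {T : Type} (D : T -> Prop) (h : T -> T) :
  (forall x, D x -> D (h x)) ->
  forall x, (forall k, (k < 1)%nat -> D (Nat.iter k h x)) <->
            (forall k, (k < 2)%nat -> D (Nat.iter k h x)).
Proof.
  intros Hinv x; split; intros H k Hk.
  - assert (Dx : D x) by exact (H 0%nat ltac:(lia)).
    destruct k as [|[|k]]; [exact Dx | exact (Hinv x Dx) | lia].
  - apply H; lia.
Qed.

Lemma Rpower_pos (x a : R) : 0 < Rpower x a.
Proof. apply exp_pos. Qed.

Lemma Rpower_antimono_base_lt_1 (x a b : R) :
  0 < x < 1 -> a < b -> Rpower x b < Rpower x a.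
Proof.
  intros Hx Hab; apply exp_increasing.
  assert (ln x < 0) by (rewrite <- ln_1; apply ln_increasing; lra).
  nra.
Qed.

Lemma Rpower_lt_1 (x a : R) : 0 < x < 1 -> 0 < a -> Rpower x a < 1.
Proof.
  intros Hx Ha; rewrite <- (Rpower_O x) by lra.
  exact (Rpower_antimono_base_lt_1 x 0 a Hx Ha).
Qed.

Section Bowtie.
Variable p : params.
Hypothesis Hp : valid_params p.

Let a := e24 p / e23 p.

Ltac positivity :=
  unfold valid_params in Hp; decompose [and] Hp;
  repeat (apply Rdiv_lt_0_compat || apply Rmult_lt_0_compat); lra.

Lemma rho_pos : 0 < rho p.
Proof. unfold rho; positivity. Qed.

Lemma rho_t_pos : 0 < rho_t p.
Proof. unfold rho_t; positivity. Qed.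

Lemma L_exponent_gap : 1 + nu p * a - rho p = delta p * (c25 p / e23 p).
Proof.
  unfold a, nu, rho, delta; unfold valid_params in Hp; decompose [and] Hp.
  field; lra.
Qed.

Lemma R_exponent_gap : a + nu_t p - rho_t p * a = delta_t p * (c21 p / e23 p).
Proof.
  unfold a, nu_t, rho_t, delta_t; unfold valid_params in Hp; decompose [and] Hp.
  field; lra.
Qed.

Lemma D_hL_invariant : delta p > 0 -> forall y, D_hL p y -> D_hL p (h_L p y).
Proof.
  intros Hd [[x1 x3] x4] (Hx1 & Hx3 & Hx4 & Hdom); simpl.
  assert (Hgap : rho p < 1 + nu p * a).
  { assert (0 < delta p * (c25 p / e23 p)) by positivity.
    pose proof L_exponent_gap; lra. }
  repeat split; try (apply Rmult_lt_0_compat; [lra | apply Rpower_pos]).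
  - apply Rpower_pos.
  - exact (Rpower_lt_1 x4 (rho p) Hx4 rho_pos).
  - unfold Rgt.
    rewrite <- Rpower_mult_distr, Rpower_mult by (lra || apply Rpower_pos).
    apply Rlt_trans with (Rpower x4 (1 + nu p * a)).
    + rewrite Rpower_plus, Rpower_1 by lra.
      apply Rmult_lt_compat_r; [apply Rpower_pos | exact Hdom].
    + exact (Rpower_antimono_base_lt_1 x4 _ _ Hx4 Hgap).
Qed.

Lemma D_hR_invariant : delta_t p > 0 -> forall x, D_hR p x -> D_hR p (h_R p x).
Proof.
  intros Hd [[x3 x4] x5] (Hx3 & Hx4 & Hx5 & Hdom); simpl.
  assert (Hgap : rho_t p * a < a + nu_t p).
  { assert (0 < delta_t p * (c21 p / e23 p)) by positivity.
    pose proof R_exponent_gap; lra. }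
  repeat split; try (apply Rmult_lt_0_compat; [lra | apply Rpower_pos]).
  - apply Rpower_pos.
  - exact (Rpower_lt_1 x3 (rho_t p) Hx3 rho_t_pos).
  - rewrite Rpower_mult.
    apply Rlt_trans with (Rpower x3 (a + nu_t p)).
    + rewrite Rpower_plus.
      apply Rmult_lt_compat_r; [apply Rpower_pos | exact Hdom].
    + exact (Rpower_antimono_base_lt_1 x3 _ _ Hx3 Hgap).
Qed.

End Bowtie.

Theorem lemma4p2 (p : params) (Hp : valid_params p) :
  (delta p > 0 -> forall y : point, E_L p 1 y <-> E_L p 2 y) /\
  (delta_t p > 0 -> forall x : point, E_R p 1 x <-> E_R p 2 x).
Proof.
  split; intros Hd.
  - exact (invariant_iter_domain_1_2 (D_hL p) (h_L p) (D_hL_invariant p Hp Hd)).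
  - exact (invariant_iter_domain_1_2 (D_hR p) (h_R p) (D_hR_invariant p Hp Hd)).
Qed.
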